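(* Let $A$ be a finite nonempty alphabet and $\zeta:A^\omega\to A^\omega$ a bijective $\omega$-sequential function. Then $\zeta^{-1}$ is a bijective $\omega$-sequential function.
   Context: For an infinite word $z$, $z[0,n]$ is its prefix of length $n$. A map $\zeta:A^\omega\to A^\omega$ is $\omega$-sequential if whenever a finite word $u$ is a common prefix of $x$ and $y$, then $\zeta(x)[0,|u|]=\zeta(y)[0,|u|]$. *)

From mathcomp Require Import all_boot.
Set Implicit Arguments. Unset Strict Implicit. Unset Printing Implicit Defensive.

Definition omega_word (A : Type) := nat -> A.

Definition prefix (A : Type) (z : omega_word A) (n : nat) : seq A := mkseq z n.

Definition is_prefix (A : Type) (u : seq A) (x : omega_word A) : Prop :=
  prefix x (size u) = u.

Definition omega_sequential (A : Type) (zeta : omega_word A -> omega_word A) : Prop :=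
  forall (u : seq A) (x y : omega_word A),
    is_prefix u x -> is_prefix u y ->
    prefix (zeta x) (size u) = prefix (zeta y) (size u).

From mathcomp Require Import all_boot.
(* Imported last, so that [prefix] is the word prefix of Defs, not seq's. *)
From Pilot Require Import Defs.

(* A sequential map zeta induces, for each n, a map on the finite set A^n
   sending the length-n prefix of x to that of zeta x.  If zeta is onto, so is
   this map, hence it is injective: whenever zeta x and zeta y share a prefix
   of length n, so do x and y.  Applied to x := zeta^-1 x', y := zeta^-1 y',
   this is the sequentiality of zeta^-1. *)

Section PrefixMap.

Variable A : Type.
Implicit Types (x : omega_word A) (zeta : omega_word A -> omega_word A).

Lemma size_prefix x n : size (prefix x n) = n.
Proof. exact: size_mkseq. Qed.

Lemma prefix_tupleP x n : size (prefix x n) == n.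
Proof. by rewrite size_prefix. Qed.
Canonical prefix_tuple x n := Tuple (prefix_tupleP x n).

Definition prefix_map (a0 : A) zeta {n} (t : n.-tuple A) : n.-tuple A :=
  [tuple of prefix (zeta (nth a0 t)) n].

Lemma prefix_map_prefix a0 zeta n x : omega_sequential zeta ->
  prefix_map a0 zeta [tuple of prefix x n] = [tuple of prefix (zeta x) n].
Proof.
move=> seq_zeta; apply: val_inj => /=.
have := seq_zeta (prefix x n) (nth a0 (prefix x n)) x (mkseq_nth a0 _).
by rewrite /is_prefix size_prefix; apply.
Qed.

End PrefixMap.

Arguments prefix_map {A} a0 zeta {n} t.

Lemma sequential_onto_prefix_inj {A : finType}
    {zeta zeta' : omega_word A -> omega_word A} :
  omega_sequential zeta -> cancel zeta' zeta ->
  forall n x y, prefix (zeta x) n = prefix (zeta y) n -> prefix x n = prefix y n.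
Proof.
move=> seq_zeta zetaK n x y eq_zeta_xy.
pose F : n.-tuple A -> _ := prefix_map (x 0) zeta.
pose G : n.-tuple A -> _ := prefix_map (x 0) zeta'.
have GK : cancel G F.
  move=> t; rewrite /F /G {2}/prefix_map prefix_map_prefix //; apply: val_inj => /=.
  by rewrite zetaK -[RHS](mkseq_nth (x 0) t) size_tuple.
have inj_F : injective F := can_inj (canF_sym GK).
have eq_F_xy : F [tuple of prefix x n] = F [tuple of prefix y n].
  by rewrite /F !prefix_map_prefix //; apply: val_inj.
by have /(congr1 val) := inj_F _ _ eq_F_xy.
Qed.

Theorem lemma4p7 (A : finType) (a0 : A)
  (zeta : omega_word A -> omega_word A) :
  bijective zeta -> omega_sequential zeta ->
  forall zeta_inv : omega_word A -> omega_word A,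
    cancel zeta zeta_inv -> cancel zeta_inv zeta ->
    bijective zeta_inv /\ omega_sequential zeta_inv.
Proof.
move=> _ seq_zeta zeta_inv zetaK zeta_invK; split; first by exists zeta.
move=> u x y ux uy.
apply: (sequential_onto_prefix_inj seq_zeta zeta_invK).
by rewrite !zeta_invK ux uy.
Qed.
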